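(* Let $\mathcal C=\{c_1,\ldots,c_m\}$ and let $n\ge 6(m-2)$. Suppose the manipulator has no information, i.e. the information set is $E=\mathcal F_n$, the set of all $n$-profiles of linear orders on $\mathcal C$. Then every positional scoring rule (with ties broken in the order $c_1\succ\cdots\succ c_m$) is immune to dominating manipulation: for every linear order $V_M$ on $\mathcal C$, no linear order $U$ on $\mathcal C$ dominates $V_M$.
   Context: A positional scoring rule is given by a scoring vector $(s(1),\ldots,s(m))$ of integers with $s(1)\ge s(2)\ge\cdots\ge s(m)$; each vote gives $s(i)$ points to the alternative in its $i$-th position, and the alternative with the highest total wins, ties broken in favor of smallest index. There are $n$ non-manipulators and one manipulator with true preferences $V_M$. Given an information set $E$ (set of $n$-profiles of the non-manipulators), a vote $U$ dominates a vote $V$ if for every $P\in E$, $r(P\cup\{U\})$ is ranked weakly above $r(P\cup\{V\})$ in $V_M$, and for some $P'\in E$ strictly above. Immunity means that for every $V_M$ no vote dominates $V_M$. *)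

From mathcomp Require Import all_boot all_order all_algebra all_fingroup.
Set Implicit Arguments. Unset Strict Implicit. Unset Printing Implicit Defensive.
Import Order.TTheory GRing.Theory Num.Theory.
Local Open Scope ring_scope.

(* Alternatives: 'I_m.+1, i.e. c_1,...,c_{m+1} with c_{k+1} = index k.
   A vote (linear order) is a permutation V : {perm 'I_m.+1} where
   V c is the (0-based) position of alternative c (0 = top). *)
Definition vote (m : nat) := {perm 'I_m.+1}.

Definition scoring_vector (m : nat) (s : 'I_m.+1 -> int) : Prop :=
  forall i j : 'I_m.+1, (i <= j)%N -> s j <= s i.

Definition total_score (m n : nat) (s : 'I_m.+1 -> int)
  (P : {ffun 'I_n -> vote m}) (U : vote m) (c : 'I_m.+1) : int :=
  \sum_(i < n) s (P i c) + s (U c).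

(* winner: highest total score, ties broken in favour of the smallest index.
   The picked alternative exists and is unique; ord0 is an unused default. *)
Definition winner (m n : nat) (s : 'I_m.+1 -> int)
  (P : {ffun 'I_n -> vote m}) (U : vote m) : 'I_m.+1 :=
  let sc := total_score s P U in
  odflt ord0 [pick c | [forall d, (sc d < sc c) || ((sc d == sc c) && (c <= d)%N)]].

Definition dominates (m n : nat) (s : 'I_m.+1 -> int)
  (E : {ffun 'I_n -> vote m} -> Prop) (VM U V : vote m) : Prop :=
  (forall P, E P -> (VM (winner s P U) <= VM (winner s P V))%N) /\
  (exists P, E P /\ (VM (winner s P U) < VM (winner s P V))%N).

Definition full_info_set (m n : nat) : {ffun 'I_n -> vote m} -> Prop :=
  fun _ => True.

Definition immune (m n : nat) (s : 'I_m.+1 -> int)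
  (E : {ffun 'I_n -> vote m} -> Prop) : Prop :=
  forall VM : vote m, ~ exists U : vote m, dominates s E VM U VM.

From mathcomp Require Import all_boot all_order all_algebra all_fingroup.
From mathcomp Require Import zify.
Set Implicit Arguments. Unset Strict Implicit. Unset Printing Implicit Defensive.
Import Order.TTheory GRing.Theory Num.Theory.
Local Open Scope ring_scope.

(* If [U] dominates the sincere vote [V_M], the two votes must assign different
   scores to some alternative, since otherwise the winner never changes.  A
   counting argument then gives alternatives [a], [b] such that [V_M] scores [a]
   above [b] while [U] scores [b] above [a].  The non-manipulators can be made
   to tie [a] and [b] far ahead of everybody else: they cast pairs of votes
   ranking [a] and [b] on top in both orders, and each of the other [m - 2]
   alternatives is ranked last in at least three pairs (enough to outweigh the
   odd voter and the manipulator), which is where [n >= 6 (m - 2)] is needed.  Then the sincere vote elects [a] and [U] elects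
   [b], which [V_M] likes less, contradicting dominance. *)

Lemma sum_ord_pairs (V : nmodType) (g : nat -> V) (n : nat) :
  \sum_(i < n) g i =
  \sum_(j < n./2) (g j.*2 + g j.*2.+1) + (if odd n then g (n./2).*2 else 0).
Proof.
have even_sum k : \sum_(i < k.*2) g i = \sum_(j < k) (g j.*2 + g j.*2.+1).
  elim: k => [|k IHk]; first by rewrite !big_ord0.
  by rewrite doubleS !big_ord_recr /= IHk addrA.
suff split_sum k (b : bool) : \sum_(i < b + k.*2) g i =
    \sum_(j < k) (g j.*2 + g j.*2.+1) + (if b then g k.*2 else 0).
  by have := split_sum n./2 (odd n); rewrite odd_double_half.
case: b; first by rewrite add1n big_ord_recr /= even_sum.
by rewrite add0n even_sum addr0.
Qed.

Lemma ler_sum_nat_term (R : numDomainType) (g : nat -> R) (lo hi j : nat) :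
  (forall i, 0 <= g i) -> (lo <= j < hi)%N -> g j <= \sum_(lo <= i < hi) g i.
Proof.
move=> g_ge0 /andP[lo_j j_hi].
rewrite (big_cat_nat lo_j (ltnW j_hi)) /= [\sum_(j <= i < hi) _]big_ltn //.
by rewrite addrCA lerDl addr_ge0 // sumr_ge0.
Qed.

Lemma ler_sum_three_terms (R : numDomainType) (g : nat -> R) (K j1 j2 j3 : nat) :
  (forall i, 0 <= g i) -> (j1 < j2 < j3)%N -> (j3 < K)%N ->
  g j1 + g j2 + g j3 <= \sum_(j < K) g j.
Proof.
move=> g_ge0 /andP[lt12 lt23] lt3K.
have lt2K := ltn_trans lt23 lt3K.
rewrite -(big_mkord xpredT) (big_cat_nat (leq0n j1.+1) (ltn_trans lt12 lt2K)).
rewrite (@big_cat_nat _ _ _ j2.+1 j1.+1 K _ _ (ltnW lt12) lt2K) /= addrA.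
by rewrite !lerD // ler_sum_nat_term // ?lt12 ?lt23 ?lt3K ?leqnn.
Qed.

(* X and Y put equally many alternatives at the positions scoring at least
   [s (Y c)]; [c] is one of Y's but not of X's, so some [e] is X's but not Y's. *)
Lemma exists_score_overtake (T : finType) (R : realDomainType) (s : T -> R)
    (X Y : {perm T}) (c : T) :
  s (X c) < s (Y c) -> exists2 e, s (Y e) < s (Y c) & s (Y c) <= s (X e).
Proof.
move=> ltXYc; set A := [set i | s (Y c) <= s i].
have /subsetPn[e] : ~~ (X @^-1: A \subset Y @^-1: A).
  apply/negP => sub.
  have /eqP eqXY : X @^-1: A == Y @^-1: A.
    by rewrite eqEcard sub !(card_preimset _ (@perm_inj _ _)) leqnn.
  have : c \in Y @^-1: A by rewrite !inE.
  by rewrite -eqXY !inE leNgt ltXYc.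
by rewrite !inE -ltNge; exists e.
Qed.

Lemma exists_reversed_pair (T : finType) (R : realDomainType) (s : T -> R)
    (X Y : {perm T}) :
  (exists c, s (X c) != s (Y c)) ->
  exists a b, s (X b) < s (X a) /\ s (Y a) < s (Y b).
Proof.
case=> c; case: (ltrgtP (s (X c)) (s (Y c))) => // [ltXY|ltYX] _.
  have [e ltYe leXe] := exists_score_overtake ltXY.
  by exists e, c; split; first exact: lt_le_trans leXe.
have [e ltXe leYe] := exists_score_overtake ltYX.
by exists c, e; split; last exact: lt_le_trans leYe.
Qed.

Lemma winner_eq_lead (m n : nat) (s : 'I_m.+1 -> int) (P : {ffun 'I_n -> vote m})
    (U : vote m) (w : 'I_m.+1) :
  (forall d, d != w -> total_score s P U d < total_score s P U w \/
     (total_score s P U d = total_score s P U w /\ (w < d)%N)) ->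
  winner s P U = w.
Proof.
move=> lead; rewrite /winner; set sc := total_score s P U.
have wins : [forall d, (sc d < sc w) || ((sc d == sc w) && (w <= d)%N)].
  apply/forallP => d; have [->|/lead] := eqVneq d w; first by rewrite eqxx leqnn orbT.
  by rewrite -/sc => -[->//|[-> /ltnW ->]]; rewrite eqxx orbT.
case: pickP => [x /forallP x_wins /= | /(_ w)]; last by rewrite wins.
move/forallP: wins => /(_ x) /orP[ltxw|/andP[/eqP eqxw lewx]];
  move: (x_wins w) => /orP[ltwx|/andP[/eqP eqwx lexw]].
- by have := lt_trans ltxw ltwx; rewrite ltxx.
- by move: ltxw; rewrite eqwx ltxx.
- by move: ltwx; rewrite eqxw ltxx.
- by apply/val_inj/eqP; rewrite eqn_leq lewx lexw.
Qed.

Lemma eq_winner_scores (m n : nat) (s : 'I_m.+1 -> int) (P : {ffun 'I_n -> vote m})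
    (U V : vote m) :
  (forall c, s (U c) = s (V c)) -> winner s P U = winner s P V.
Proof.
move=> eqUV; have eq_sc d : total_score s P U d = total_score s P V d.
  by rewrite /total_score eqUV.
rewrite /winner; congr odflt; apply: eq_pick => c /=.
by apply: eq_forallb => d; rewrite !eq_sc.
Qed.

Section SeparatingProfile.

Variables (m n : nat) (s : 'I_m.+1 -> int).
Hypothesis s_scoring : scoring_vector s.
Hypothesis s_nonconst : s ord_max < s ord0.
Variables (a b : 'I_m.+1).
Hypothesis neq_ab : a != b.
Hypothesis n_large : (6 * (m.+1 - 2) <= n)%N.

Local Notation p0 := (ord0 : 'I_m.+1).
Local Notation p1 := (inord 1 : 'I_m.+1).

Lemma m_gt0 : (0 < m)%N.
Proof.
have : ord_max != ord0 :> 'I_m.+1 by apply: contraTneq s_nonconst => ->; rewrite ltxx.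
by rewrite -val_eqE /= lt0n.
Qed.

Lemma p1E : nat_of_ord p1 = 1%N.
Proof. by rewrite inordK // ltnS m_gt0. Qed.

Lemma neq_p0_p1 : p0 != p1.
Proof. by rewrite -val_eqE /= p1E. Qed.

Lemma score_le_p0 i : s i <= s p0.
Proof. exact: s_scoring. Qed.

Lemma score_ge_last i : s ord_max <= s i.
Proof. by apply: s_scoring; rewrite -ltnS. Qed.

Lemma score_le_p1 i : i != p0 -> s i <= s p1.
Proof. by move=> neq_i0; apply: s_scoring; rewrite p1E lt0n -val_eqE in neq_i0 *. Qed.

Definition top_two : vote m := (tperm a p0 * tperm (tperm a p0 b) p1)%g.

Lemma top_two_a : top_two a = p0.
Proof.
rewrite permM tpermL; apply: tpermD; last by rewrite eq_sym neq_p0_p1.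
by rewrite -{2}(tpermL a p0) (inj_eq perm_inj) eq_sym.
Qed.

Lemma top_two_b : top_two b = p1.
Proof. by rewrite permM tpermL. Qed.

(* Cycling through the positions [2, ..., m] of [top_two], the pair votes rank
   every alternative other than [a] and [b] last once every [m - 1] pairs. *)
Definition last_slot (j : nat) : 'I_m.+1 := inord (2 + j %% m.-1).

Definition pair_vote (j : nat) : vote m :=
  if (1 < m)%N then (top_two * tperm (last_slot j) ord_max)%g else top_two.

Definition swap_top : vote m := tperm p0 p1.

Definition pair_score (c : 'I_m.+1) (j : nat) : int :=
  s (pair_vote j c) + s (swap_top (pair_vote j c)).

Lemma last_slotE j : (1 < m)%N -> nat_of_ord (last_slot j) = (2 + j %% m.-1)%N.
Proof.
move=> m_gt1; rewrite inordK //.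
have := @ltn_pmod j m.-1; lia.
Qed.

Lemma pair_vote_a j : pair_vote j a = p0.
Proof.
rewrite /pair_vote; case: ifP => m_gt1; last exact: top_two_a.
by rewrite permM top_two_a tpermD // -val_eqE /= ?last_slotE //; lia.
Qed.

Lemma pair_vote_b j : pair_vote j b = p1.
Proof.
rewrite /pair_vote; case: ifP => m_gt1; last exact: top_two_b.
by rewrite permM top_two_b tpermD // -val_eqE /= ?last_slotE ?p1E //; lia.
Qed.

Lemma pair_score_a j : pair_score a j = s p0 + s p1.
Proof. by rewrite /pair_score pair_vote_a tpermL. Qed.

Lemma pair_score_b j : pair_score b j = s p0 + s p1.
Proof. by rewrite /pair_score pair_vote_b tpermR addrC. Qed.

Lemma pair_vote_other c j :
  c != a -> c != b -> pair_vote j c != p0 /\ pair_vote j c != p1.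
Proof. by rewrite -(pair_vote_a j) -(pair_vote_b j) !(inj_eq perm_inj). Qed.

Lemma pair_score_other c j : c != a -> c != b -> pair_score c j <= s p0 + s p1.
Proof.
move=> ca cb; have [c0 c1] := pair_vote_other j ca cb.
rewrite /pair_score tpermD 1?eq_sym //.
by have := score_le_p1 c0; have := score_le_p0 p1; lia.
Qed.

Lemma pair_score_last c : c != a -> c != b ->
  exists2 r, (r < m.-1)%N & forall t, pair_score c (t * m.-1 + r) = s ord_max *+ 2.
Proof.
move=> ca cb; have tc0 : top_two c != p0 by rewrite -top_two_a (inj_eq perm_inj).
have tc1 : top_two c != p1 by rewrite -top_two_b (inj_eq perm_inj).
move: tc0 tc1; rewrite -!val_eqE /= p1E => tc0 tc1.
have tc_le := ltn_ord (top_two c); have m_gt1 : (1 < m)%N by lia.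
exists (top_two c - 2)%N => [|t]; first by lia.
have slot : last_slot (t * m.-1 + (top_two c - 2)) = top_two c.
  by apply: val_inj; rewrite /= last_slotE // modnMDl modn_small; lia.
rewrite /pair_score /pair_vote m_gt1 permM slot tpermL tpermD ?mulr2n //;
  by rewrite -val_eqE /= ?p1E; lia.
Qed.

Lemma sum_pair_score_ab : \sum_(j < n./2) pair_score a j = \sum_(j < n./2) pair_score b j.
Proof. by apply: eq_bigr => j _; rewrite pair_score_a pair_score_b. Qed.

Lemma sum_pair_score_gap c : c != a -> c != b ->
  \sum_(j < n./2) pair_score c j + (s p0 - s ord_max) *+ 3
    <= \sum_(j < n./2) pair_score a j.
Proof.
move=> ca cb; have [r lt_r last_r] := pair_score_last ca cb.
have gap_ge0 j : 0 <= pair_score a j - pair_score c j.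
  by rewrite subr_ge0 pair_score_a pair_score_other.
have gap_last t :
    s p0 - s ord_max <= pair_score a (t * m.-1 + r) - pair_score c (t * m.-1 + r).
  by rewrite last_r pair_score_a; have := score_ge_last p1; lia.
have idx : (0 * m.-1 + r < 1 * m.-1 + r < 2 * m.-1 + r)%N by apply/andP; split; lia.
have idx_lt : (2 * m.-1 + r < n./2)%N by lia.
rewrite -lerBrDl -sumrB; apply: le_trans (ler_sum_three_terms gap_ge0 idx idx_lt).
rewrite !mulrS mulr0n.
by have := gap_last 0%N; have := gap_last 1%N; have := gap_last 2%N; lia.
Qed.

Definition padded_vote (Z : vote m) (i : nat) : vote m :=
  if (i < n./2.*2)%N then
    (if odd i then (pair_vote i./2 * swap_top)%g else pair_vote i./2)
  else Z.

Definition padded_profile (Z : vote m) : {ffun 'I_n -> vote m} :=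
  [ffun i : 'I_n => padded_vote Z i].

Lemma total_score_padded Z V c : total_score s (padded_profile Z) V c =
  \sum_(j < n./2) pair_score c j + (if odd n then s (Z c) else 0) + s (V c).
Proof.
rewrite /total_score (eq_bigr (fun i : 'I_n => s (padded_vote Z i c))) => [|i _];
  last by rewrite ffunE.
rewrite (sum_ord_pairs (fun i => s (padded_vote Z i c))) /padded_vote ltnn.
congr (_ + _ + _); apply: eq_bigr => j _.
have lt_j := ltn_ord j.
rewrite ltn_double lt_j odd_double doubleK -doubleS leq_double lt_j /=.
by rewrite odd_double uphalf_double permM.
Qed.

Lemma padded_others_lose Z V c : c != a -> c != b ->
  total_score s (padded_profile Z) V c < total_score s (padded_profile Z) V a /\
  total_score s (padded_profile Z) V c < total_score s (padded_profile Z) V b.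
Proof.
move=> ca cb; rewrite !total_score_padded -sum_pair_score_ab.
have := sum_pair_score_gap ca cb; rewrite !mulrS mulr0n.
have := score_le_p0 (V c); have := score_ge_last (V a); have := score_ge_last (V b).
case: (odd n); last by lia.
have := score_le_p0 (Z c); have := score_ge_last (Z a).
by have := score_ge_last (Z b); lia.
Qed.

Lemma separating_profile (VM U : vote m) :
  s (VM b) < s (VM a) -> s (U a) < s (U b) ->
  exists P : {ffun 'I_n -> vote m}, winner s P VM = a /\ winner s P U = b.
Proof.
move=> ltV ltU; have neq_ab_val : nat_of_ord a <> nat_of_ord b.
  by move/val_inj; apply/eqP.
(* The odd voter, if any, casts [VM] (if [a < b]) or [U] (otherwise) with [a]
   and [b] exchanged, so that [a] and [b] tie exactly under the vote whose
   intended winner is favoured by the tie-break. *)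
pose Z := if (a < b)%N then (tperm a b * VM)%g else (tperm a b * U)%g.
exists (padded_profile Z); split; apply: winner_eq_lead => d neq_d.
  have [->|neq_db] := eqVneq d b;
    last by left; case: (padded_others_lose Z VM neq_d neq_db).
  rewrite !total_score_padded sum_pair_score_ab /Z.
  by case: (odd n) => /=; [case: ifP => ?; rewrite !permM ?tpermL ?tpermR | ]; lia.
have [->|neq_da] := eqVneq d a;
  last by left; case: (padded_others_lose Z U neq_da neq_d).
rewrite !total_score_padded sum_pair_score_ab /Z.
by case: (odd n) => /=; [case: ifP => ?; rewrite !permM ?tpermL ?tpermR | ]; lia.
Qed.

End SeparatingProfile.

Theorem theorem3 (m n : nat) (s : 'I_m.+1 -> int) :
  scoring_vector s ->
  (6 * (m.+1 - 2) <= n)%N ->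
  immune s (@full_info_set m n).
Proof.
move=> s_scoring n_large VM [U [U_weak [P0 [_ U_strict]]]].
have [eq_scores|/forallPn[c neq_c]] := boolP [forall c, s (VM c) == s (U c)].
  move: U_strict; rewrite (@eq_winner_scores _ _ s P0 U VM) ?ltnn // => c.
  by apply/esym/eqP/(forallP eq_scores).
have [a [b [ltV ltU]]] := exists_reversed_pair (ex_intro _ c neq_c).
have neq_ab : a != b by apply: contraTneq ltV => ->; rewrite ltxx.
have s_nonconst : s ord_max < s ord0.
  apply: le_lt_trans (s_scoring _ ord_max (leq_ord _)) _.
  exact: lt_le_trans ltV (s_scoring ord0 _ (leq0n _)).
have [P [winV winU]] := separating_profile s_scoring s_nonconst neq_ab n_large ltV ltU.
have := U_weak P I; rewrite winV winU => /s_scoring.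
by rewrite leNgt ltV.
Qed.
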